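(* Let $F$ be the free loop on a countably infinite set of generators and let $L=F/F_3$ (the free loop of nilpotency class $2$ in the sense of Bruck on countably many generators). Then the group $\mathrm{LMlt}(L)$ is not nilpotent.
   Context: A loop is a set with a product and two-sided identity in which all left and right multiplications are bijective; $\mathrm{LMlt}(L)$ is the group of permutations of $L$ generated by the left multiplications $L_a\colon x\mapsto ax$. For a loop $F$ and a normal subloop $N$, $[N,F]$ denotes the smallest subloop of $N$ which is normal in $F$ and such that $N/[N,F]$ is contained in the centre of $F/[N,F]$ (the centre of a loop consisting of the elements that commute and associate with all elements). Bruck's lower central series is $F_1=F$, $F_{k+1}=[F_k,F]$. *)

From Stdlib Require Import PeanoNat.

(* Bijectivity is witnessed by the left and
   right division operations (the inverses of L_a and R_a). *)
Record Loop := {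
  carrier :> Type;
  mul : carrier -> carrier -> carrier;
  one : carrier;
  ldiv : carrier -> carrier -> carrier;
  rdiv : carrier -> carrier -> carrier;
  mul1l : forall x, mul one x = x;
  mul1r : forall x, mul x one = x;
  mulKl : forall a x, mul a (ldiv a x) = x;
  ldivKl : forall a x, ldiv a (mul a x) = x;
  mulKr : forall a x, mul (rdiv x a) a = x;
  rdivKr : forall a x, rdiv (mul x a) a = x
}.

Arguments mul {l} _ _.
Arguments one {l}.
Arguments ldiv {l} _ _.
Arguments rdiv {l} _ _.

Definition loop_hom {A B : Loop} (f : A -> B) : Prop :=
  forall x y, f (mul x y) = mul (f x) (f y).

Definition free_loop_on {F : Loop} (iota : nat -> F) : Prop :=
  forall (M : Loop) (f : nat -> M),
    (exists g : F -> M, loop_hom g /\ forall n, g (iota n) = f n) /\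
    (forall g1 g2 : F -> M, loop_hom g1 -> loop_hom g2 ->
       (forall n, g1 (iota n) = g2 (iota n)) -> forall x, g1 x = g2 x).

Section LoopSets.
Variable F : Loop.

Definition subloop (K : F -> Prop) : Prop :=
  K one /\ (forall x y, K x -> K y -> K (mul x y) /\ K (ldiv x y) /\ K (rdiv x y)).

Definition set_eq (P Q : F -> Prop) : Prop := forall z, P z <-> Q z.

Definition lcoset (x : F) (K : F -> Prop) : F -> Prop :=
  fun z => exists k, K k /\ z = mul x k.
Definition rcoset (K : F -> Prop) (x : F) : F -> Prop :=
  fun z => exists k, K k /\ z = mul k x.

Definition normal_subloop (K : F -> Prop) : Prop :=
  subloop K /\
  forall x y,
    set_eq (lcoset x K) (rcoset K x) /\
    set_eq (fun z => exists w, lcoset y K w /\ z = mul x w) (lcoset (mul x y) K) /\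
    set_eq (fun z => exists w, rcoset K x w /\ z = mul w y) (rcoset K (mul x y)).

(* equality of cosets aK = bK, i.e. equality in F/K *)
Definition cong (K : F -> Prop) (a b : F) : Prop := set_eq (lcoset a K) (lcoset b K).

(* N/K is contained in the centre of F/K: each nK commutes and associates
   (in every position) with all elements of F/K. *)
Definition central_mod (K N : F -> Prop) : Prop :=
  forall n x y, N n ->
    cong K (mul n x) (mul x n) /\
    cong K (mul (mul n x) y) (mul n (mul x y)) /\
    cong K (mul (mul x n) y) (mul x (mul n y)) /\
    cong K (mul (mul x y) n) (mul x (mul y n)).

(* [N,F]: the smallest subloop of N, normal in F, with N/[N,F] central in
   F/[N,F]; realised as the intersection of all such subloops. *)
Definition bruck_comm (N : F -> Prop) : F -> Prop :=
  fun z => forall K : F -> Prop,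
    normal_subloop K -> (forall k, K k -> N k) -> central_mod K N -> K z.

(* Bruck's lower central series, shifted: bruck_lcs 0 = F_1 = F,
   bruck_lcs (k+1) = F_{k+2} = [F_{k+1}, F]. *)
Fixpoint bruck_lcs (k : nat) : F -> Prop :=
  match k with
  | 0 => fun _ => True
  | S k' => bruck_comm (bruck_lcs k')
  end.

End LoopSets.

(* A permutation of T is represented by a pair (forward map, inverse map);
   the generated subgroups below only ever produce genuine inverse pairs. *)
Definition perm_pair (T : Type) := ((T -> T) * (T -> T))%type.

Definition pone {T} : perm_pair T := (fun x => x, fun x => x).
Definition pmul {T} (g h : perm_pair T) : perm_pair T :=
  (fun x => fst g (fst h x), fun x => snd h (snd g x)).
Definition pinv {T} (g : perm_pair T) : perm_pair T := (snd g, fst g).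
Definition pcomm {T} (g h : perm_pair T) : perm_pair T :=
  pmul (pinv g) (pmul (pinv h) (pmul g h)).

Inductive gen {T} (S : perm_pair T -> Prop) : perm_pair T -> Prop :=
| gen_base g : S g -> gen S g
| gen_one : gen S pone
| gen_inv g : gen S g -> gen S (pinv g)
| gen_mul g h : gen S g -> gen S h -> gen S (pmul g h).

(* lower central series of a group G of permutations:
   glcs G 0 = G = gamma_1, glcs G (k+1) = [gamma_{k+1}, G] = gamma_{k+2} *)
Fixpoint glcs {T} (G : perm_pair T -> Prop) (k : nat) : perm_pair T -> Prop :=
  match k with
  | 0 => G
  | S k' => gen (fun c => exists g h, glcs G k' g /\ G h /\ c = pcomm g h)
  end.

Definition nilpotent_group {T} (G : perm_pair T -> Prop) : Prop :=
  exists n, forall g, glcs G n g -> forall x, fst g x = x.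

Definition LMlt (L : Loop) : perm_pair L -> Prop :=
  gen (fun g => exists a : L, g = (fun x => mul a x, fun x => ldiv a x)).

From Stdlib Require Import ZArith Lia Bool ClassicalEpsilon.

(* Let M be (C2 x C2) x Z with product (p, z)(q, w) = (p + q, z + w + θ(p, q)),
   where θ(p, q) = p1 q2 is 0 or 1.  The factor Z is central and M/Z is
   abelian, so M has Bruck class 2 and every homomorphism F -> M kills F_3;
   thus the homomorphism sending two generators to u = ((1,0), 0) and
   v = ((0,1), 0) factors through L.  As θ is not a cocycle, M is not a group:
   the iterated commutators [L_u, L_v, ..., L_v] in LMlt(M) act as nonzero
   translations ±(-2)^k on Z.  Their preimages [L_a, L_b, ..., L_b] in LMlt(L)
   lie arbitrarily deep in the lower central series and are nontrivial. *)

Section LoopFacts.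
Context {F : Loop}.

Lemma ldiv_self (x : F) : ldiv x x = one.
Proof. rewrite <- (mul1r F x) at 2. apply ldivKl. Qed.

Lemma rdiv_self (x : F) : rdiv x x = one.
Proof. rewrite <- (mul1l F x) at 1. apply rdivKr. Qed.

Lemma ldiv_eq1 (a b : F) : ldiv a b = one <-> a = b.
Proof.
  split.
  - intro H. rewrite <- (mulKl F a b), H. symmetry. apply mul1r.
  - intros ->. apply ldiv_self.
Qed.

Lemma rdiv_eq1 (a b : F) : rdiv a b = one <-> a = b.
Proof.
  split.
  - intro H. rewrite <- (mulKr F b a), H. apply mul1l.
  - intros ->. apply rdiv_self.
Qed.

Lemma subloop_ldiv (K : F -> Prop) y t :
  subloop F K -> K y -> K (ldiv y t) <-> K t.
Proof.
  intros [_ HK] Hy. split; intro Ht.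
  - rewrite <- (mulKl F y t). apply (HK _ _ Hy Ht).
  - apply (HK _ _ Hy Ht).
Qed.

End LoopFacts.

Section Homomorphisms.
Context {A B : Loop} (q : A -> B) (Hq : loop_hom q).

Lemma hom_one : q one = one.
Proof.
  assert (Hsq : q one = mul (q one) (q one)) by (rewrite <- Hq, mul1l; reflexivity).
  rewrite <- (ldiv_self (q one)). rewrite Hsq at 3. symmetry. apply ldivKl.
Qed.

Lemma hom_ldiv a b : q (ldiv a b) = ldiv (q a) (q b).
Proof. rewrite <- (mulKl A a b) at 2. rewrite Hq, ldivKl. reflexivity. Qed.

Lemma hom_rdiv a b : q (rdiv a b) = rdiv (q a) (q b).
Proof. rewrite <- (mulKr A b a) at 2. rewrite Hq, rdivKr. reflexivity. Qed.

Lemma hom_eq_ldiv a b : q (ldiv a b) = one <-> q a = q b.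
Proof. rewrite hom_ldiv. apply ldiv_eq1. Qed.

Lemma hom_eq_rdiv a b : q (rdiv a b) = one <-> q a = q b.
Proof. rewrite hom_rdiv. apply rdiv_eq1. Qed.

End Homomorphisms.

Section Normality.
Context {F : Loop}.
Implicit Types (K N : F -> Prop) (x y z a b n : F).

(* Bruck's three coset identities, read through [z \in xK <-> K (x \ z)]
   and [z \in Kx <-> K (z / x)]. *)
Definition normal_ldiv K : Prop := forall x y z,
  (K (ldiv x z) <-> K (rdiv z x)) /\
  (K (ldiv y (ldiv x z)) <-> K (ldiv (mul x y) z)) /\
  (K (rdiv (rdiv z y) x) <-> K (rdiv z (mul x y))).

Lemma lcosetE K x z : lcoset F x K z <-> K (ldiv x z).
Proof.
  split.
  - intros [k [Hk ->]]. rewrite ldivKl. exact Hk.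
  - intro Hz. exists (ldiv x z). rewrite mulKl. auto.
Qed.

Lemma rcosetE K x z : rcoset F K x z <-> K (rdiv z x).
Proof.
  split.
  - intros [k [Hk ->]]. rewrite rdivKr. exact Hk.
  - intro Hz. exists (rdiv z x). rewrite mulKr. auto.
Qed.

Lemma mul_lcosetE K x y z :
  (exists w, lcoset F y K w /\ z = mul x w) <-> K (ldiv y (ldiv x z)).
Proof.
  split.
  - intros [w [Hw ->]]. rewrite ldivKl. apply lcosetE, Hw.
  - intro Hz. exists (ldiv x z). rewrite mulKl, lcosetE. auto.
Qed.

Lemma rcoset_mulE K x y z :
  (exists w, rcoset F K x w /\ z = mul w y) <-> K (rdiv (rdiv z y) x).
Proof.
  split.
  - intros [w [Hw ->]]. rewrite rdivKr. apply rcosetE, Hw.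
  - intro Hz. exists (rdiv z y). rewrite mulKr, rcosetE. auto.
Qed.

Lemma normal_subloopE K : normal_subloop F K <-> subloop F K /\ normal_ldiv K.
Proof.
  split; intros [Hs Hn]; split; try exact Hs.
  - intros x y z. destruct (Hn x y) as [H1 [H2 H3]].
    rewrite <- lcosetE, <- rcosetE, <- mul_lcosetE, <- lcosetE,
      <- rcoset_mulE, <- rcosetE.
    auto.
  - intros x y. split; [|split]; intro z; destruct (Hn x y z) as [H1 [H2 H3]].
    + rewrite lcosetE, rcosetE. exact H1.
    + rewrite mul_lcosetE, lcosetE. exact H2.
    + rewrite rcoset_mulE, rcosetE. exact H3.
Qed.

Lemma cong_ldiv K a b : normal_subloop F K -> cong F K a b <-> K (ldiv a b).
Proof.
  intro HK. destruct (proj1 (normal_subloopE K) HK) as [Hs Hn]. split.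
  - intro Hab. apply lcosetE, Hab, lcosetE. rewrite ldiv_self. apply Hs.
  - intros Hab z. rewrite !lcosetE.
    rewrite <- (mulKl F a b) at 1. rewrite <- (proj1 (proj2 (Hn _ _ _))).
    symmetry. apply subloop_ldiv; assumption.
Qed.

Lemma ldiv_same_lcoset N x a b : normal_subloop F N ->
  N (ldiv x a) -> N (ldiv x b) -> N (ldiv a b).
Proof.
  intros HN Ha Hb. destruct (proj1 (normal_subloopE N) HN) as [Hs Hn].
  rewrite <- (mulKl F x a). rewrite <- (proj1 (proj2 (Hn _ _ _))).
  apply subloop_ldiv; assumption.
Qed.

Lemma central_mod_self N : normal_subloop F N -> central_mod F N N.
Proof.
  intros HN n x y Hn. destruct (proj1 (normal_subloopE N) HN) as [_ Hnl].
  assert (Hl : forall u z, N (ldiv u z) <-> N (rdiv z u)) by (intros u z; apply (Hnl u u z)).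
  assert (Hm : forall u v z, N (ldiv v (ldiv u z)) <-> N (ldiv (mul u v) z))
    by (intros u v z; apply (Hnl u v z)).
  assert (Hr : forall u v z, N (rdiv (rdiv z v) u) <-> N (rdiv z (mul u v)))
    by (intros u v z; apply (Hnl u v z)).
  split; [|split; [|split]]; apply (proj2 (cong_ldiv _ _ _ HN)).
  - apply (ldiv_same_lcoset N x); auto.
    + apply Hl. rewrite rdivKr. exact Hn.
    + rewrite ldivKl. exact Hn.
  - apply (ldiv_same_lcoset N (mul x y)); auto.
    + apply Hl, Hr. rewrite !rdivKr. exact Hn.
    + apply Hl. rewrite rdivKr. exact Hn.
  - apply (ldiv_same_lcoset N (mul x y)); auto.
    + apply Hl, Hr. rewrite !rdivKr. apply Hl. rewrite ldivKl. exact Hn.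
    + apply Hm. rewrite !ldivKl. apply Hl. rewrite rdivKr. exact Hn.
  - apply (ldiv_same_lcoset N (mul x y)); auto.
    + rewrite ldivKl. exact Hn.
    + apply Hm. rewrite !ldivKl. exact Hn.
Qed.

End Normality.

Definition central_elt {M : Loop} (m : M) : Prop := forall x y : M,
  mul m x = mul x m /\
  mul (mul m x) y = mul m (mul x y) /\
  mul (mul x m) y = mul x (mul m y) /\
  mul (mul x y) m = mul x (mul y m).

Section BruckCommutator.
Context {F : Loop}.
Implicit Types (K N : F -> Prop).

Lemma kernel_normal {B : Loop} (q : F -> B) :
  loop_hom q -> normal_subloop F (fun z => q z = one).
Proof.
  intro Hq. apply normal_subloopE. split.
  - split; [exact (hom_one q Hq)|].
    intros x y Hx Hy. cbv beta in *. rewrite Hq, hom_ldiv, hom_rdiv, Hx, Hy by exact Hq.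
    split; [apply mul1l | split; [apply ldiv_self | apply rdiv_self]].
  - intros x y z. cbv beta.
    rewrite !(hom_eq_ldiv q Hq), !(hom_eq_rdiv q Hq), !Hq, (hom_ldiv q Hq), (hom_rdiv q Hq).
    split; [|split]; split.
    + intros; symmetry; assumption.
    + intros; symmetry; assumption.
    + intros ->. apply mulKl.
    + intros <-. symmetry. apply ldivKl.
    + intros <-. symmetry. apply mulKr.
    + intros ->. apply rdivKr.
Qed.

Lemma normal_subloopI K N : normal_subloop F K -> normal_subloop F N ->
  normal_subloop F (fun z => K z /\ N z).
Proof.
  rewrite !normal_subloopE. intros [[HK1 HK] HKn] [[HN1 HN] HNn]. split.
  - split; [split; assumption|].
    intros x y [HxK HxN] [HyK HyN].
    destruct (HK x y HxK HyK) as [? [? ?]], (HN x y HxN HyN) as [? [? ?]].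
    repeat split; assumption.
  - intros x y z. destruct (HKn x y z) as [? [? ?]], (HNn x y z) as [? [? ?]].
    tauto.
Qed.

Lemma bruck_comm_normal N : normal_subloop F (bruck_comm F N).
Proof.
  apply normal_subloopE. split.
  - split.
    + intros K HK _ _. apply HK.
    + intros x y Hx Hy. repeat split; intros K HK HKN Hc;
        specialize (Hx K HK HKN Hc); specialize (Hy K HK HKN Hc); apply HK; assumption.
  - intros x y z. unfold bruck_comm. repeat split; intros H K HK HKN Hc;
      specialize (H K HK HKN Hc);
      destruct (proj2 (proj1 (normal_subloopE K) HK) x y z) as [? [? ?]]; tauto.
Qed.

(* N ∩ ker q is one of the subloops intersected in the definition of [N,F]. *)
Lemma bruck_comm_kernel {B : Loop} (q : F -> B) N :
  loop_hom q -> normal_subloop F N -> (forall n, N n -> central_elt (q n)) ->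
  forall z, bruck_comm F N z -> q z = one.
Proof.
  intros Hq HN Hcent z Hz.
  assert (HK : normal_subloop F (fun z => N z /\ q z = one))
    by exact (normal_subloopI _ _ HN (kernel_normal q Hq)).
  apply (Hz _ HK); [tauto|].
  intros n x y Hn.
  destruct (central_mod_self N HN n x y Hn) as [C1 [C2 [C3 C4]]].
  destruct (Hcent n Hn (q x) (q y)) as [E1 [E2 [E3 E4]]].
  split; [|split; [|split]]; apply (proj2 (cong_ldiv _ _ _ HK)); split.
  all: first
    [ apply (proj1 (cong_ldiv _ _ _ HN)); assumption
    | apply (hom_eq_ldiv q Hq); rewrite !Hq; assumption ].
Qed.

End BruckCommutator.

Lemma normal_subloopT (F : Loop) : normal_subloop F (fun _ => True).
Proof. apply normal_subloopE. repeat split; tauto. Qed.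

Lemma bruck_lcs2_kernel {F M A : Loop} (g : F -> M) (c : M -> A) :
  loop_hom g -> loop_hom c ->
  (forall a : A, central_elt a) -> (forall m, c m = one -> central_elt m) ->
  forall z, bruck_lcs F 2 z -> g z = one.
Proof.
  intros Hg Hc HA Hker.
  assert (Hcg : loop_hom (fun z => c (g z))) by (intros x y; rewrite Hg; apply Hc).
  assert (HF2 : forall z, bruck_lcs F 1 z -> c (g z) = one).
  { exact (bruck_comm_kernel _ _ Hcg (normal_subloopT F) (fun n _ => HA _)). }
  exact (bruck_comm_kernel g _ Hg (bruck_comm_normal _) (fun n Hn => Hker _ (HF2 n Hn))).
Qed.

Lemma hom_factor {F L M : Loop} (pi : F -> L) (g : F -> M) :
  loop_hom pi -> loop_hom g -> (forall y, exists x, pi x = y) ->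
  (forall x, pi x = one -> g x = one) ->
  exists h : L -> M, loop_hom h /\ forall x, h (pi x) = g x.
Proof.
  intros Hpi Hg Hsurj Hker.
  assert (Hcompat : forall x x', pi x = pi x' -> g x = g x').
  { intros x x' E. apply (hom_eq_ldiv g Hg), Hker, (hom_eq_ldiv pi Hpi), E. }
  pose (sec y := proj1_sig (constructive_indefinite_description _ (Hsurj y))).
  assert (Hsec : forall y, pi (sec y) = y) by (intro y; apply proj2_sig).
  assert (Hh : forall x, g (sec (pi x)) = g x) by (intro x; apply Hcompat, Hsec).
  exists (fun y => g (sec y)). split; [|exact Hh].
  intros y1 y2. destruct (Hsurj y1) as [x1 <-], (Hsurj y2) as [x2 <-].
  rewrite <- Hpi, !Hh. apply Hg.
Qed.

Definition Lm {A : Loop} (a : A) : perm_pair A := (fun x => mul a x, fun x => ldiv a x).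

(* [L_a, L_b, ..., L_b] with k+1 copies of L_b. *)
Fixpoint engel_comm {A : Loop} (a b : A) (k : nat) : perm_pair A :=
  match k with
  | 0 => pcomm (Lm a) (Lm b)
  | S k' => pcomm (engel_comm a b k') (Lm b)
  end.

Lemma LMlt_Lm {A : Loop} (a : A) : LMlt A (Lm a).
Proof. apply gen_base. exists a. reflexivity. Qed.

Lemma engel_comm_glcs {A : Loop} (a b : A) k : glcs (LMlt A) k (engel_comm a b k).
Proof.
  induction k as [|k IH]; simpl.
  - unfold pcomm. repeat (apply gen_mul || apply gen_inv); apply LMlt_Lm.
  - apply gen_base. exists (engel_comm a b k), (Lm b). auto using LMlt_Lm.
Qed.

Section Intertwining.
Context {A B : Loop} (h : A -> B).

Definition intertwines (g : perm_pair A) (G : perm_pair B) : Prop :=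
  forall y, h (fst g y) = fst G (h y) /\ h (snd g y) = snd G (h y).

Lemma intertwines_pmul g1 g2 G1 G2 :
  intertwines g1 G1 -> intertwines g2 G2 -> intertwines (pmul g1 g2) (pmul G1 G2).
Proof.
  intros H1 H2 y. simpl. split.
  - rewrite (proj1 (H1 _)), (proj1 (H2 _)). reflexivity.
  - rewrite (proj2 (H2 _)), (proj2 (H1 _)). reflexivity.
Qed.

Lemma intertwines_pinv g G : intertwines g G -> intertwines (pinv g) (pinv G).
Proof. intros H y. simpl. split; apply H. Qed.

Lemma intertwines_pcomm g1 g2 G1 G2 :
  intertwines g1 G1 -> intertwines g2 G2 -> intertwines (pcomm g1 g2) (pcomm G1 G2).
Proof.
  intros H1 H2. unfold pcomm.
  repeat (apply intertwines_pmul || apply intertwines_pinv); assumption.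
Qed.

Lemma intertwines_engel_comm (Hh : loop_hom h) a b k :
  intertwines (engel_comm a b k) (engel_comm (h a) (h b) k).
Proof.
  assert (HL : forall c, intertwines (Lm c) (Lm (h c))).
  { intros c y. simpl. rewrite Hh, (hom_ldiv h Hh). auto. }
  induction k; simpl; apply intertwines_pcomm; auto.
Qed.

End Intertwining.

Lemma not_nilpotent_LMlt {A B : Loop} (h : A -> B) (a b : A) : loop_hom h ->
  (forall k, fst (engel_comm (h a) (h b) k) one <> one) ->
  ~ nilpotent_group (LMlt A).
Proof.
  intros Hh Hmove [n Hn]. apply (Hmove n).
  rewrite <- (hom_one h Hh), <- (proj1 (intertwines_engel_comm h Hh a b n one)).
  f_equal. exact (Hn _ (engel_comm_glcs a b n) one).
Qed.

Section TwistedKlein.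
Local Open Scope Z_scope.

Definition kxor (p q : bool * bool) : bool * bool :=
  (xorb (fst p) (fst q), xorb (snd p) (snd q)).

Definition Klein : Loop.
Proof.
  refine {| carrier := bool * bool; mul := kxor; one := (false, false);
            ldiv := kxor; rdiv := kxor |};
    intros [[] []]; try intros [[] []]; reflexivity.
Defined.

(* Not a Z-valued 2-cocycle, since xor is not additive in Z; hence [Twist]
   is not associative. *)
Definition theta (p q : bool * bool) : Z := if fst p && snd q then 1 else 0.

Definition Twist : Loop.
Proof.
  refine {| carrier := ((bool * bool) * Z)%type;
            mul x y := (kxor (fst x) (fst y), snd x + snd y + theta (fst x) (fst y));
            one := ((false, false), 0);
            ldiv a x := (kxor (fst a) (fst x),
                         snd x - snd a - theta (fst a) (kxor (fst a) (fst x)));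
            rdiv x a := (kxor (fst x) (fst a),
                         snd x - snd a - theta (kxor (fst x) (fst a)) (fst a)) |};
    intros [[[] []] ?]; try intros [[[] []] ?]; cbn; f_equal; lia.
Defined.

Lemma Klein_central (a : Klein) : central_elt a.
Proof. intros x y. destruct a as [[] []], x as [[] []], y as [[] []]; repeat split. Qed.

Lemma Twist_central (m : Twist) : fst m = (false, false) -> central_elt m.
Proof.
  destruct m as [p z]; cbn; intros ->. intros [[[] []] ?] [[[] []] ?];
    cbn; repeat split; f_equal; lia.
Qed.

Lemma Twist_fst_hom : loop_hom (fun m : Twist => (fst m : Klein)).
Proof. intros x y. reflexivity. Qed.

Definition twist_u : Twist := ((true, false), 0).
Definition twist_v : Twist := ((false, true), 0).

Definition sign_snd (p : bool * bool) : Z := if snd p then -1 else 1.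

(* Since sign_snd changes sign under translation by [fst twist_v], each further
   commutator with L_v doubles the translation and flips its sign. *)
Lemma engel_comm_Twist k p w :
  fst (engel_comm twist_u twist_v k) (p, w) = (p, w + (-2) ^ Z.of_nat k * sign_snd p) /\
  snd (engel_comm twist_u twist_v k) (p, w) = (p, w - (-2) ^ Z.of_nat k * sign_snd p).
Proof.
  revert p w. induction k as [|k IH]; intros [[] []] w.
  1-4: cbn; split; f_equal; lia.
  all: rewrite Nat2Z.inj_succ, Z.pow_succ_r by lia.
  all: remember ((-2) ^ Z.of_nat k) as s; cbn -[Z.mul].
  all: repeat (rewrite (proj1 (IH _ _)) || rewrite (proj2 (IH _ _)); cbn -[Z.mul]).
  all: split; f_equal; lia.
Qed.

Lemma engel_comm_Twist_one k : fst (engel_comm twist_u twist_v k) one <> one.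
Proof.
  change (@one Twist) with ((false, false), 0).
  rewrite (proj1 (engel_comm_Twist k _ _)). cbn [sign_snd snd]. intros [= E].
  apply (Z.pow_nonzero (-2) (Z.of_nat k)); lia.
Qed.

End TwistedKlein.

Theorem proposition3p5 (F : Loop) (iota : nat -> F) (Hfree : free_loop_on iota)
  (L : Loop) (pi : F -> L) (Hhom : loop_hom pi)
  (Hsurj : forall y : L, exists x : F, pi x = y)
  (Hker : forall x : F, pi x = one <-> bruck_lcs F 2 x) :
  ~ nilpotent_group (LMlt L).
Proof.
  pose (gen_image (n : nat) := match n with O => twist_u | S O => twist_v | _ => one end : Twist).
  destruct (proj1 (Hfree Twist gen_image)) as [g [Hg Hgen]].
  assert (Hker_g : forall x, pi x = one -> g x = one).
  { intros x Hx. apply (bruck_lcs2_kernel g _ Hg Twist_fst_hom Klein_central Twist_central).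
    apply Hker, Hx. }
  destruct (hom_factor pi g Hhom Hg Hsurj Hker_g) as [h [Hh Hhpi]].
  apply (not_nilpotent_LMlt h (pi (iota 0)) (pi (iota 1)) Hh).
  rewrite !Hhpi, !Hgen. exact engel_comm_Twist_one.
Qed.
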